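(* Let $X$ be an infinite-dimensional complex separable Hilbert space, $A\in\mathcal B(X)$, $0<\tau<\infty$, and $\mathcal G\subset X$ countable. If $\{e^{tA^*}g\}_{g\in\mathcal G,\,t\in[0,\tau)}$ is a semi-continuous frame for $X$, then $\mathcal G$ is infinite.
   Context: $e^{tA^*}=\sum_{n\ge0}(tA^* )^n/n!$. The family $\{e^{tA^*}g\}_{g\in\mathcal G,t\in[0,\tau)}$ is a semi-continuous frame if there are $c_1,c_2>0$ with $c_1\|x\|^2\le\sum_{g\in\mathcal G}\int_0^\tau|\langle x,e^{tA^*}g\rangle|^2dt\le c_2\|x\|^2$ for all $x\in X$. *)

From Stdlib Require Import Reals List ClassicalEpsilon Arith Factorial.
Open Scope R_scope.

Record Cplx := mkC { re : R; im : R }.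
Definition C0 : Cplx := mkC 0 0.
Definition C1 : Cplx := mkC 1 0.
Definition RtoC (r : R) : Cplx := mkC r 0.
Definition Cadd (a b : Cplx) : Cplx := mkC (re a + re b) (im a + im b).
Definition Cmul (a b : Cplx) : Cplx :=
  mkC (re a * re b - im a * im b) (re a * im b + im a * re b).
Definition Cconj (a : Cplx) : Cplx := mkC (re a) (- im a).
Definition Cabs2 (a : Cplx) : R := re a * re a + im a * im a.

Record CHilbert := {
  carrier :> Type;
  vzero : carrier;
  vadd : carrier -> carrier -> carrier;
  vopp : carrier -> carrier;
  vscal : Cplx -> carrier -> carrier;
  inner : carrier -> carrier -> Cplx;
  vadd_assoc : forall x y z, vadd x (vadd y z) = vadd (vadd x y) z;
  vadd_comm : forall x y, vadd x y = vadd y x;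
  vadd_0 : forall x, vadd x vzero = x;
  vadd_opp : forall x, vadd x (vopp x) = vzero;
  vscal_1 : forall x, vscal C1 x = x;
  vscal_mul : forall a b x, vscal a (vscal b x) = vscal (Cmul a b) x;
  vscal_addv : forall a x y, vscal a (vadd x y) = vadd (vscal a x) (vscal a y);
  vscal_addC : forall a b x, vscal (Cadd a b) x = vadd (vscal a x) (vscal b x);
  inner_add : forall x y z, inner (vadd x y) z = Cadd (inner x z) (inner y z);
  inner_scal : forall a x y, inner (vscal a x) y = Cmul a (inner x y);
  inner_conj : forall x y, inner y x = Cconj (inner x y);
  inner_pos : forall x, 0 <= re (inner x x);
  inner_def : forall x, inner x x = C0 -> x = vzero;
  complete : forall u : nat -> carrier,
    (forall eps, eps > 0 -> exists N, forall n m, (n >= N)%nat -> (m >= N)%nat ->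
        sqrt (re (inner (vadd (u n) (vopp (u m))) (vadd (u n) (vopp (u m))))) < eps) ->
    exists l, forall eps, eps > 0 -> exists N, forall n, (n >= N)%nat ->
        sqrt (re (inner (vadd (u n) (vopp l)) (vadd (u n) (vopp l)))) < eps
}.

Arguments vzero {_}.
Arguments vadd {_}.
Arguments vopp {_}.
Arguments vscal {_}.
Arguments inner {_}.

Section HS.
Context {X : CHilbert}.

Definition vnorm (x : X) : R := sqrt (re (inner x x)).
Definition vdist (x y : X) : R := vnorm (vadd x (vopp y)).

Fixpoint lincomb (c : nat -> Cplx) (v : nat -> X) (n : nat) : X :=
  match n with
  | O => vzero
  | S n' => vadd (lincomb c v n') (vscal (c n') (v n'))
  end.

Definition separable : Prop :=
  exists d : nat -> X, forall x eps, eps > 0 -> exists n, vdist x (d n) < eps.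

Definition infinite_dimensional : Prop :=
  forall n : nat, exists v : nat -> X,
    forall c : nat -> Cplx, lincomb c v n = vzero -> forall k, (k < n)%nat -> c k = C0.

Definition bounded_linear (A : X -> X) : Prop :=
  (forall x y, A (vadd x y) = vadd (A x) (A y)) /\
  (forall a x, A (vscal a x) = vscal a (A x)) /\
  (exists M, forall x, vnorm (A x) <= M * vnorm x).

Definition is_adjoint (A B : X -> X) : Prop :=
  forall x y, inner (A x) y = inner x (B y).

Fixpoint exp_partial (T : X -> X) (t : R) (x : X) (N : nat) : X :=
  match N with
  | O => x
  | S N' => vadd (exp_partial T t x N')
                 (vscal (RtoC (t ^ N / INR (fact N))) (Nat.iter N T x))
  end.

Definition is_exp_family (T : X -> X) (E : R -> X -> X) : Prop :=
  forall t x eps, eps > 0 -> exists N0, forall N, (N >= N0)%nat ->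
      vdist (exp_partial T t x N) (E t x) < eps.

Definition countable_set (G : X -> Prop) : Prop :=
  exists h : X -> nat, forall x y, G x -> G y -> h x = h y -> x = y.
Definition infinite_set (G : X -> Prop) : Prop :=
  ~ exists l : list X, forall x, G x -> In x l.

End HS.

(** Riemann integral of f on [a,b] (the integrand here is continuous,
    hence Riemann integrable; the value is independent of the proof) *)
Definition RInt (f : R -> R) (a b : R) : R :=
  epsilon (inhabits 0)
    (fun v => exists pr : Riemann_integrable f a b, RiemannInt pr = v).

Fixpoint list_sum_R {T : Type} (F : T -> R) (l : list T) : R :=
  match l with nil => 0 | cons x l' => F x + list_sum_R F l' end.

(** lo <= sum_{g in G} F g <= hi, for F >= 0, where the (unordered) sum over G
    is the supremum of the finite partial sums. *)
Definition sum_between {T : Type} (G : T -> Prop) (F : T -> R) (lo hi : R) : Prop :=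
  (forall l, NoDup l -> Forall G l -> list_sum_R F l <= hi) /\
  (forall eps, eps > 0 -> exists l, NoDup l /\ Forall G l /\ lo - eps < list_sum_R F l).

Definition semi_continuous_frame {X : CHilbert} (E : R -> X -> X)
    (G : X -> Prop) (tau : R) : Prop :=
  exists c1 c2, 0 < c1 /\ 0 < c2 /\ forall x : X,
    sum_between G (fun g => RInt (fun t => Cabs2 (inner x (E t g))) 0 tau)
      (c1 * (vnorm x)^2) (c2 * (vnorm x)^2).

From Coquelicot Require Import Coquelicot.
From Stdlib Require Import Reals Lra Psatz List Classical ClassicalEpsilon Arith Lia.
From Pilot Require Import Defs.
Open Scope R_scope.

(* If G were a finite family g_1, ..., g_m, infinite dimensionality would give
   y <> 0 orthogonal to all (A^* )^n g_i with n <= N.  The power series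
   <y, e^{tA^* } g_i> = sum_n t^n/n! <y, (A^* )^n g_i> then starts at n = N+1,
   so for t in [0, tau) it is at most |y| |g_i| times the tail
   exp(tau |A^* |) - sum_{n <= N} (tau |A^* |)^n / n!.  Hence the frame sum at y
   is O(tail^2) |y|^2, contradicting the lower frame bound c1 |y|^2 for large N. *)

Lemma Cplx_ext (a b : Cplx) : re a = re b -> im a = im b -> a = b.
Proof. destruct a, b; simpl; intros -> ->; reflexivity. Qed.

Definition Copp (a : Cplx) : Cplx := mkC (- re a) (- im a).
Definition Csub (a b : Cplx) : Cplx := Cadd a (Copp b).

Lemma Cplx_ring_theory : ring_theory C0 C1 Cadd Cmul Csub Copp (@eq Cplx).
Proof.
  constructor; intros; apply Cplx_ext; unfold Cadd, Cmul, Csub, Copp, C0, C1; simpl; ring.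
Qed.
Add Ring Cplx_ring : Cplx_ring_theory.

Lemma Cconj_add a b : Cconj (Cadd a b) = Cadd (Cconj a) (Cconj b).
Proof. apply Cplx_ext; simpl; ring. Qed.

Lemma Cconj_mul a b : Cconj (Cmul a b) = Cmul (Cconj a) (Cconj b).
Proof. apply Cplx_ext; simpl; ring. Qed.

Lemma Cconj_RtoC r : Cconj (RtoC r) = RtoC r.
Proof. apply Cplx_ext; simpl; ring. Qed.

Lemma Cabs2_mul a b : Cabs2 (Cmul a b) = Cabs2 a * Cabs2 b.
Proof. unfold Cabs2; simpl; ring. Qed.

Lemma Cabs2_eq0 a : Cabs2 a = 0 -> a = C0.
Proof. destruct a as [x y]; unfold Cabs2; simpl; intro H; apply Cplx_ext; simpl; nra. Qed.

Lemma Cmul_eq0 a b : Cmul a b = C0 -> a = C0 \/ b = C0.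
Proof.
  intro H.
  assert (Habs : Cabs2 a * Cabs2 b = 0) by (rewrite <- Cabs2_mul, H; unfold Cabs2; simpl; ring).
  destruct (Rmult_integral _ _ Habs); [left | right]; apply Cabs2_eq0; assumption.
Qed.

Lemma Rabs_le_sqrt_mul a b c :
  0 <= b -> 0 <= c -> a * a <= b * c -> Rabs a <= sqrt b * sqrt c.
Proof.
  intros Hb Hc H. rewrite <- sqrt_mult, <- sqrt_Rsqr_abs by assumption.
  apply sqrt_le_1_alt. exact H.
Qed.

Fixpoint Csum (n : nat) (f : nat -> Cplx) : Cplx :=
  match n with O => C0 | S n' => Cadd (Csum n' f) (f n') end.

Lemma Csum_ext n f g : (forall i, (i < n)%nat -> f i = g i) -> Csum n f = Csum n g.
Proof.
  induction n; intro H; simpl; [reflexivity |].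
  rewrite IHn by (intros; apply H; lia). rewrite H by lia. reflexivity.
Qed.

Lemma Csum_add n f g : Csum n (fun i => Cadd (f i) (g i)) = Cadd (Csum n f) (Csum n g).
Proof. induction n; simpl; [| rewrite IHn]; ring. Qed.

Lemma Csum_mull n a f : Csum n (fun i => Cmul a (f i)) = Cmul a (Csum n f).
Proof. induction n; simpl; [| rewrite IHn]; ring. Qed.

Lemma Csum_eq0 n f : (forall i, (i < n)%nat -> f i = C0) -> Csum n f = C0.
Proof.
  intro H. rewrite (Csum_ext n f (fun _ => Cmul C0 C0)), Csum_mull; [ring |].
  intros i Hi. rewrite H by exact Hi. ring.
Qed.

(* [skip j] enumerates the indices different from [j]; [unskip j] inverts it off [j]. *)
Definition skip (j i : nat) : nat := if (i <? j)%nat then i else S i.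
Definition unskip (j i : nat) : nat := if (i <? j)%nat then i else pred i.

Lemma Csum_skip j n f : (j <= n)%nat ->
  Cadd (Csum n (fun i => f (skip j i))) (f j) = Csum (S n) f.
Proof.
  intro Hj. replace n with (j + (n - j))%nat by lia. induction (n - j)%nat as [|k IHk].
  - rewrite Nat.add_0_r. simpl. f_equal. apply Csum_ext. intros i Hi. unfold skip.
    destruct (Nat.ltb_spec i j); [reflexivity | lia].
  - rewrite Nat.add_succ_r. simpl in *. rewrite <- IHk.
    unfold skip at 2. destruct (Nat.ltb_spec (j + k) j); [lia | ring].
Qed.

(* Gaussian elimination of the unknown [j] with the equation [r0] (pivot [r0 j]). *)
Definition pivot_reduce (r0 : nat -> Cplx) (j : nat) (r : nat -> Cplx) : nat -> Cplx :=
  fun i => Csub (Cmul (r0 j) (r (skip j i))) (Cmul (r0 (skip j i)) (r j)).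

Definition pivot_lift (r0 : nat -> Cplx) (j n : nat) (c : nat -> Cplx) : nat -> Cplx :=
  fun i => if (i =? j)%nat then Copp (Csum n (fun k => Cmul (c k) (r0 (skip j k))))
           else Cmul (r0 j) (c (unskip j i)).

Lemma pivot_lift_skip r0 j n c k : pivot_lift r0 j n c (skip j k) = Cmul (r0 j) (c k).
Proof.
  unfold pivot_lift, skip, unskip. destruct (Nat.ltb_spec k j).
  - destruct (Nat.eqb_spec k j); [lia |]. destruct (Nat.ltb_spec k j); [reflexivity | lia].
  - destruct (Nat.eqb_spec (S k) j); [lia |]. destruct (Nat.ltb_spec (S k) j); [lia | reflexivity].
Qed.

Lemma Csum_pivot_lift r0 j n c r : (j <= n)%nat ->
  Csum (S n) (fun i => Cmul (pivot_lift r0 j n c i) (r i)) =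
  Csum n (fun k => Cmul (c k) (pivot_reduce r0 j r k)).
Proof.
  intro Hj. rewrite <- (Csum_skip j n (fun i => Cmul (pivot_lift r0 j n c i) (r i))) by exact Hj.
  rewrite (Csum_ext n _ (fun k => Cmul (r0 j) (Cmul (c k) (r (skip j k)))))
    by (intros; rewrite pivot_lift_skip; ring).
  unfold pivot_reduce.
  rewrite (Csum_ext n (fun k => Cmul (c k) (Csub (Cmul (r0 j) (r (skip j k)))
                                                  (Cmul (r0 (skip j k)) (r j))))
                     (fun k => Cadd (Cmul (r0 j) (Cmul (c k) (r (skip j k))))
                                    (Cmul (Copp (r j)) (Cmul (c k) (r0 (skip j k))))))
    by (intros; unfold Csub; ring).
  rewrite Csum_add, !Csum_mull. unfold pivot_lift. rewrite Nat.eqb_refl. ring.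
Qed.

Lemma homogeneous_system_nontrivial (rows : list (nat -> Cplx)) n :
  (length rows < n)%nat ->
  exists d, (exists i, (i < n)%nat /\ d i <> C0) /\
    forall r, In r rows -> Csum n (fun i => Cmul (d i) (r i)) = C0.
Proof.
  remember (length rows) as m eqn:Hm. revert rows n Hm.
  induction m as [|m IH]; intros rows n Hm Hn.
  - destruct rows; [| discriminate].
    exists (fun _ => C1). split; [| intros r []].
    exists 0%nat. split; [lia |]. intro H. apply (f_equal re) in H. simpl in H. lra.
  - destruct rows as [|r0 rows]; [discriminate |]. injection Hm as Hm.
    destruct (classic (forall i, (i < n)%nat -> r0 i = C0)) as [Hr0 | Hr0].
    + destruct (IH rows n Hm) as [d [Hd Hrows]]; [lia |].
      exists d. split; [exact Hd |]. intros r [<- | Hin]; [| exact (Hrows r Hin)].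
      apply Csum_eq0. intros i Hi. rewrite Hr0 by exact Hi. ring.
    + apply not_all_ex_not in Hr0. destruct Hr0 as [j Hj].
      apply imply_to_and in Hj. destruct Hj as [Hjn Hpivot].
      destruct n as [|n]; [lia |].
      destruct (IH (map (pivot_reduce r0 j) rows) n) as [c [[i0 [Hi0 Hci0]] Hc]];
        [rewrite length_map; exact Hm | lia |].
      exists (pivot_lift r0 j n c). split.
      * exists (skip j i0). split; [unfold skip; destruct (Nat.ltb_spec i0 j); lia |].
        rewrite pivot_lift_skip. intro H. apply Cmul_eq0 in H. tauto.
      * intros r Hr. rewrite Csum_pivot_lift by lia. destruct Hr as [<- | Hin].
        -- apply Csum_eq0. intros i Hi. unfold pivot_reduce, Csub. ring.
        -- apply Hc, in_map, Hin.
Qed.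

Section InnerProductSpace.
Context {X : CHilbert}.

Definition vnorm2 (x : X) : R := re (inner x x).

Lemma vadd_idem_eq0 (y : X) : vadd y y = y -> y = vzero.
Proof.
  intro H.
  assert (E : vadd (vadd y y) (vopp y) = vadd y (vopp y)) by (rewrite H; reflexivity).
  rewrite <- vadd_assoc, !vadd_opp, vadd_0 in E. exact E.
Qed.

Lemma vscal_C0 (x : X) : vscal C0 x = vzero.
Proof. apply vadd_idem_eq0. rewrite <- vscal_addC. f_equal. ring. Qed.

Lemma vopp_scal (x : X) : vopp x = vscal (RtoC (-1)) x.
Proof.
  assert (E : vadd x (vscal (RtoC (-1)) x) = vzero).
  { rewrite <- (vscal_1 X x) at 1. rewrite <- vscal_addC.
    replace (Cadd C1 (RtoC (-1))) with C0 by (apply Cplx_ext; simpl; ring).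
    apply vscal_C0. }
  rewrite <- (vadd_0 X (vopp x)), <- E, vadd_assoc, (vadd_comm X (vopp x) x), vadd_opp.
  rewrite vadd_comm, vadd_0. reflexivity.
Qed.

Lemma inner_0l (w : X) : inner vzero w = C0.
Proof. rewrite <- (vscal_C0 vzero), inner_scal. ring. Qed.

Lemma inner_addr (x y z : X) : inner x (vadd y z) = Cadd (inner x y) (inner x z).
Proof. rewrite inner_conj, inner_add, Cconj_add, <- !inner_conj. reflexivity. Qed.

Lemma inner_scalr a (x y : X) : inner x (vscal a y) = Cmul (Cconj a) (inner x y).
Proof. rewrite inner_conj, inner_scal, Cconj_mul, <- inner_conj. reflexivity. Qed.

Lemma inner_scalr_RtoC r (x y : X) : inner x (vscal (RtoC r) y) = Cmul (RtoC r) (inner x y).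
Proof. rewrite inner_scalr, Cconj_RtoC. reflexivity. Qed.

Lemma inner_oppr (x y : X) : inner x (vopp y) = Copp (inner x y).
Proof. rewrite vopp_scal, inner_scalr_RtoC. apply Cplx_ext; simpl; ring. Qed.

Lemma im_inner_self (x : X) : im (inner x x) = 0.
Proof.
  assert (H : im (inner x x) = im (Cconj (inner x x))) by (rewrite <- inner_conj; reflexivity).
  simpl in H. lra.
Qed.

Lemma vnorm2_ge0 (x : X) : 0 <= vnorm2 x.
Proof. apply inner_pos. Qed.

Lemma vnorm2_eq0 (x : X) : vnorm2 x = 0 -> x = vzero.
Proof. intro H. apply inner_def, Cplx_ext; [exact H | apply im_inner_self]. Qed.

Lemma vnorm2_gt0 (x : X) : x <> vzero -> 0 < vnorm2 x.
Proof.
  intro Hx. destruct (vnorm2_ge0 x) as [| Hz]; [assumption |].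
  exfalso. apply Hx, vnorm2_eq0. symmetry. exact Hz.
Qed.

Lemma vnorm2_add_scal (x y : X) c :
  vnorm2 (vadd x (vscal c y)) = vnorm2 x + 2 * re (Cmul (Cconj c) (inner x y)) + Cabs2 c * vnorm2 y.
Proof.
  unfold vnorm2. rewrite inner_add, !inner_addr, !inner_scal, !inner_scalr, (inner_conj X x y).
  pose proof (im_inner_self y) as Hy.
  unfold Cabs2; destruct (inner x y) as [p q], c as [c1 c2]; simpl. rewrite Hy. ring.
Qed.

Lemma Cabs2_inner_le (x y : X) : Cabs2 (inner x y) <= vnorm2 x * vnorm2 y.
Proof.
  destruct (Req_dec (vnorm2 y) 0) as [H0 | H0].
  - rewrite H0. apply vnorm2_eq0 in H0. subst y.
    rewrite inner_conj, inner_0l. unfold Cabs2; simpl. nra.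
  - (* expand |x - (<x,y> / |y|^2) y|^2 >= 0 *)
    assert (Hn : 0 < vnorm2 y) by (pose proof (vnorm2_ge0 y); lra).
    pose proof (vnorm2_ge0 (vadd x (vscal (Cmul (RtoC (- / vnorm2 y)) (inner x y)) y))) as H.
    rewrite vnorm2_add_scal in H. unfold Cabs2 in *.
    destruct (inner x y) as [p q]; simpl in *.
    set (n := vnorm2 y) in *.
    assert (Hk : n * / n = 1) by (field; lra).
    match type of H with 0 <= ?e =>
      assert (H2 : 0 <= n * e) by (apply Rmult_le_pos; lra);
      replace (n * e) with (n * vnorm2 x - 2 * (n * / n) * (p * p + q * q)
                            + (n * / n) * (n * / n) * (p * p + q * q)) in H2 by ring
    end.
    rewrite Hk in H2. lra.
Qed.

Lemma vnorm_ge0 (x : X) : 0 <= vnorm x.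
Proof. apply sqrt_pos. Qed.

Lemma vnorm_sqr (x : X) : vnorm x * vnorm x = vnorm2 x.
Proof. apply sqrt_sqrt, vnorm2_ge0. Qed.

Lemma vnorm_pow2 (x : X) : vnorm x ^ 2 = vnorm2 x.
Proof. rewrite <- vnorm_sqr. ring. Qed.

Lemma Rabs_re_inner_le (x y : X) : Rabs (re (inner x y)) <= vnorm x * vnorm y.
Proof.
  apply Rabs_le_sqrt_mul; try apply vnorm2_ge0.
  pose proof (Cabs2_inner_le x y). unfold Cabs2, vnorm2 in *. nra.
Qed.

Lemma Rabs_im_inner_le (x y : X) : Rabs (im (inner x y)) <= vnorm x * vnorm y.
Proof.
  apply Rabs_le_sqrt_mul; try apply vnorm2_ge0.
  pose proof (Cabs2_inner_le x y). unfold Cabs2, vnorm2 in *. nra.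
Qed.

Lemma inner_limit_re_im (x : X) (u : nat -> X) (l : X) :
  (forall eps, eps > 0 -> exists N0, forall N, (N >= N0)%nat -> vdist (u N) l < eps) ->
  Un_cv (fun N => re (inner x (u N))) (re (inner x l)) /\
  Un_cv (fun N => im (inner x (u N))) (im (inner x l)).
Proof.
  intro Hu.
  assert (Hk : forall eps, eps > 0 -> exists N0, forall N, (N >= N0)%nat ->
     Rabs (re (inner x (u N)) - re (inner x l)) < eps /\
     Rabs (im (inner x (u N)) - im (inner x l)) < eps).
  { intros eps Heps. pose proof (vnorm_ge0 x) as Hx.
    destruct (Hu (eps / (vnorm x + 1))) as [N0 HN0].
    { apply Rlt_gt, Rdiv_lt_0_compat; lra. }
    exists N0. intros N HN. specialize (HN0 N HN). unfold vdist in HN0.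
    set (d := vadd (u N) (vopp l)) in HN0.
    assert (Hsmall : vnorm x * vnorm d < eps).
    { apply Rle_lt_trans with ((vnorm x + 1) * vnorm d); [pose proof (vnorm_ge0 d); nra |].
      replace eps with ((vnorm x + 1) * (eps / (vnorm x + 1))) by (field; lra).
      apply Rmult_lt_compat_l; lra. }
    pose proof (Rabs_re_inner_le x d) as Hre. pose proof (Rabs_im_inner_le x d) as Him.
    assert (Hd : inner x d = Cadd (inner x (u N)) (Copp (inner x l)))
      by (unfold d; rewrite inner_addr, inner_oppr; reflexivity).
    rewrite Hd in Hre, Him. simpl in Hre, Him.
    split; unfold Rminus; lra. }
  split; intros eps Heps; destruct (Hk eps Heps) as [N0 HN0]; exists N0; intros N HN;
    apply HN0, HN.
Qed.

Lemma inner_lincomb (c : nat -> Cplx) (v : nat -> X) n w :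
  inner (lincomb c v n) w = Csum n (fun i => Cmul (c i) (inner (v i) w)).
Proof. induction n; simpl; [apply inner_0l | rewrite inner_add, inner_scal, IHn; reflexivity]. Qed.

Lemma exists_orthogonal_nonzero (hinf : @infinite_dimensional X) (ws : list X) :
  exists y : X, y <> vzero /\ forall w, In w ws -> inner y w = C0.
Proof.
  destruct (hinf (S (length ws))) as [v Hv].
  destruct (homogeneous_system_nontrivial (map (fun w i => inner (v i) w) ws) (S (length ws)))
    as [d [[i0 [Hi0 Hd]] Hr]]; [rewrite length_map; lia |].
  exists (lincomb d v (S (length ws))). split.
  - intro H0. exact (Hd (Hv d H0 i0 Hi0)).
  - intros w Hw. rewrite inner_lincomb.
    exact (Hr _ (in_map (fun w i => inner (v i) w) ws w Hw)).
Qed.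

Lemma exists_orthogonal_to_orbits (hinf : @infinite_dimensional X) (T : X -> X) (l : list X) N :
  exists y : X, y <> vzero /\
    forall g n, In g l -> (n <= N)%nat -> inner y (Nat.iter n T g) = C0.
Proof.
  destruct (exists_orthogonal_nonzero hinf
              (flat_map (fun g => map (fun n => Nat.iter n T g) (seq 0 (S N))) l))
    as [y [Hy0 Hy]].
  exists y. split; [exact Hy0 |]. intros g n Hg Hn.
  apply Hy, in_flat_map. exists g. split; [exact Hg |].
  apply (in_map (fun n => Nat.iter n T g)), in_seq. lia.
Qed.

Lemma adjoint_norm_bound (A Astar : X -> X) :
  bounded_linear A -> is_adjoint A Astar ->
  exists M, 0 <= M /\ forall z, vnorm (Astar z) <= M * vnorm z.
Proof.
  intros [_ [_ [M HM]]] Hadj. set (M' := Rmax M 0).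
  assert (HM' : 0 <= M') by apply Rmax_r.
  exists M'. split; [exact HM' |]. intro z. set (w := Astar z).
  assert (HAw : vnorm (A w) <= M' * vnorm w).
  { pose proof (HM w). pose proof (vnorm_ge0 w). pose proof (Rmax_l M 0). unfold M'. nra. }
  assert (Hw2 : vnorm w * vnorm w <= M' * vnorm w * vnorm z).
  { rewrite vnorm_sqr. unfold vnorm2.
    replace (inner w w) with (inner (A w) z) by (unfold w; apply Hadj).
    pose proof (Rabs_re_inner_le (A w) z). pose proof (Rle_abs (re (inner (A w) z))).
    pose proof (vnorm_ge0 z). nra. }
  pose proof (vnorm_ge0 w). pose proof (vnorm_ge0 z).
  destruct (Req_dec (vnorm w) 0) as [Hw0 | Hw0]; [rewrite Hw0; nra |].
  apply (Rmult_le_reg_l (vnorm w)); nra.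
Qed.

Lemma vnorm_iter_le (T : X -> X) M :
  0 <= M -> (forall z, vnorm (T z) <= M * vnorm z) ->
  forall n g, vnorm (Nat.iter n T g) <= M ^ n * vnorm g.
Proof.
  intros HM HT n g. induction n; simpl; [lra |].
  pose proof (HT (Nat.iter n T g)). pose proof (pow_le M n HM). nra.
Qed.

Lemma inner_exp_partial (T : X -> X) (x g : X) t N :
  inner x (exp_partial T t g N) =
  mkC (sum_f_R0 (fun n => t ^ n / INR (fact n) * re (inner x (Nat.iter n T g))) N)
      (sum_f_R0 (fun n => t ^ n / INR (fact n) * im (inner x (Nat.iter n T g))) N).
Proof.
  induction N as [|N IHN].
  - apply Cplx_ext; simpl; field.
  - simpl exp_partial. rewrite inner_addr, inner_scalr_RtoC, IHN, !tech5.
    apply Cplx_ext; simpl; ring.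
Qed.

Lemma exp_family_inner_cv (T : X -> X) (E : R -> X -> X) :
  is_exp_family T E -> forall (x g : X) t,
  Un_cv (fun N => sum_f_R0 (fun n => t ^ n / INR (fact n) * re (inner x (Nat.iter n T g))) N)
        (re (inner x (E t g))) /\
  Un_cv (fun N => sum_f_R0 (fun n => t ^ n / INR (fact n) * im (inner x (Nat.iter n T g))) N)
        (im (inner x (E t g))).
Proof.
  intros hE x g t.
  destruct (inner_limit_re_im x (exp_partial T t g) (E t g) (hE t g)) as [Hre Him].
  split; [eapply Un_cv_ext, Hre | eapply Un_cv_ext, Him];
    intro N; cbv beta; rewrite inner_exp_partial; reflexivity.
Qed.
End InnerProductSpace.

Definition exp_taylor (B : R) (N : nat) : R := sum_f_R0 (fun i => / INR (fact i) * B ^ i) N.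

Lemma exp_taylor_cv B : Un_cv (exp_taylor B) (exp B).
Proof. unfold exp. destruct (exist_exp B) as [l Hl]. exact Hl. Qed.

Lemma inv_fact_ge0 n : 0 <= / INR (fact n).
Proof. left. apply Rinv_0_lt_compat, INR_fact_lt_0. Qed.

Lemma exp_taylor_le_exp B N : 0 <= B -> exp_taylor B N <= exp B.
Proof.
  intro HB. apply growing_ineq; [| apply exp_taylor_cv].
  intro n. change (exp_taylor B (S n)) with (exp_taylor B n + / INR (fact (S n)) * B ^ S n).
  pose proof (pow_le B (S n) HB). pose proof (inv_fact_ge0 (S n)). nra.
Qed.

Lemma exp_taylor_tail_small B C c : 0 <= C -> 0 < c ->
  exists N, C * (exp B - exp_taylor B N) ^ 2 < c.
Proof.
  intros HC Hc. set (eps := sqrt (c / (C + 1))).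
  assert (Hq : 0 < c / (C + 1)) by (apply Rdiv_lt_0_compat; lra).
  assert (Heps2 : eps * eps = c / (C + 1)) by (apply sqrt_sqrt; lra).
  destruct (exp_taylor_cv B eps) as [N HN]; [apply sqrt_lt_R0; exact Hq |].
  exists N. specialize (HN N (Nat.le_refl N)). unfold R_dist in HN.
  set (a := exp_taylor B N - exp B) in HN.
  assert (Ha : (exp B - exp_taylor B N) ^ 2 = Rabs a * Rabs a)
    by (rewrite <- Rabs_mult, Rabs_pos_eq by nra; unfold a; ring).
  pose proof (Rabs_pos a).
  assert (Hsq : (exp B - exp_taylor B N) ^ 2 < c / (C + 1)) by nra.
  replace c with ((C + 1) * (c / (C + 1))) by (field; lra).
  pose proof (pow2_ge_0 (exp B - exp_taylor B N)). nra.
Qed.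

Lemma Un_cv_Rabs_le (u : nat -> R) l c : Un_cv u l -> (forall k, Rabs (u k) <= c) -> Rabs l <= c.
Proof.
  intros Hu Hb. destruct (Rle_dec (Rabs l) c) as [| Hn]; [assumption | exfalso].
  destruct (Hu (Rabs l - c)) as [N HN]; [lra |].
  specialize (HN N (Nat.le_refl N)). unfold R_dist in HN. specialize (Hb N).
  pose proof (Rabs_triang_inv l (u N)). rewrite <- Rabs_Ropp in HN.
  replace (- (u N - l)) with (l - u N) in HN by ring. lra.
Qed.

Lemma sum_f_R0_eq0 (f : nat -> R) N : (forall n, (n <= N)%nat -> f n = 0) -> sum_f_R0 f N = 0.
Proof.
  induction N; intro H; simpl; [apply H; lia |].
  rewrite IHN by (intros; apply H; lia). rewrite H by lia. ring.
Qed.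

Section ExpTypeSeries.
Variables (alpha : nat -> R) (K M : R) (h : R -> R).
Hypothesis HK : 0 <= K.
Hypothesis HM : 0 <= M.
Hypothesis Halpha : forall n, Rabs (alpha n) <= K * M ^ n.
Hypothesis Hh : forall t,
  Un_cv (fun N => sum_f_R0 (fun n => t ^ n / INR (fact n) * alpha n) N) (h t).

Lemma exp_type_term_le T t n : Rabs t <= T ->
  Rabs (t ^ n / INR (fact n) * alpha n) <= K * (/ INR (fact n) * (T * M) ^ n).
Proof.
  intro Ht. unfold Rdiv. rewrite !Rabs_mult, <- RPow_abs, (Rabs_pos_eq (/ _)) by apply inv_fact_ge0.
  rewrite Rpow_mult_distr.
  pose proof (pow_incr (Rabs t) T n (conj (Rabs_pos t) Ht)).
  pose proof (pow_le (Rabs t) n (Rabs_pos t)). pose proof (inv_fact_ge0 n).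
  apply Rle_trans with (T ^ n * / INR (fact n) * (K * M ^ n)); [| right; ring].
  apply Rmult_le_compat; [| apply Rabs_pos | apply Rmult_le_compat_r |]; auto.
  apply Rmult_le_pos; assumption.
Qed.

Lemma exp_type_series_continuous t : continuity_pt h t.
Proof.
  set (a := fun n => alpha n / INR (fact n)).
  assert (Hps : forall t, is_pseries a t (h t)).
  { intro s. apply is_pseries_Reals. intros eps Heps. destruct (Hh s eps Heps) as [N HN].
    exists N. intros n Hn. rewrite (sum_eq _ (fun k => s ^ k / INR (fact k) * alpha k));
      [exact (HN n Hn) |].
    intros i _. unfold a. field. apply INR_fact_neq_0. }
  assert (Hdisk : forall r, 0 <= r -> CV_disk a r).
  { intros r Hr.
    apply (@ex_series_le R_AbsRing R_CompleteNormedModule _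
             (fun n => K * (/ INR (fact n) * (r * M) ^ n))).
    - intro n. change (norm (Rabs (a n * r ^ n))) with (Rabs (Rabs (a n * r ^ n))).
      rewrite Rabs_Rabsolu.
      replace (a n * r ^ n) with (r ^ n / INR (fact n) * alpha n)
        by (unfold a; field; apply INR_fact_neq_0).
      apply exp_type_term_le. rewrite Rabs_pos_eq; lra.
    - apply (ex_series_scal_l K (fun n => / INR (fact n) * (r * M) ^ n)).
      exists (exp (r * M)). apply is_series_Reals, exp_taylor_cv. }
  apply continuity_pt_ext with (PSeries a).
  - intro s. apply is_pseries_unique, Hps.
  - apply PSeries_continuity. apply Rbar_lt_le_trans with (Rabs t + 1); [simpl; lra |].
    apply (proj1 (Lub_Rbar_correct (CV_disk a))), Hdisk. pose proof (Rabs_pos t). lra.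
Qed.

Lemma exp_type_series_tail N T t :
  0 <= T -> (forall n, (n <= N)%nat -> alpha n = 0) -> Rabs t <= T ->
  Rabs (h t) <= K * (exp (T * M) - exp_taylor (T * M) N).
Proof.
  intros HT Hz Ht. set (B := T * M). assert (HB : 0 <= B) by (unfold B; nra).
  set (f := fun n => t ^ n / INR (fact n) * alpha n).
  assert (Hf0 : forall n, (n <= N)%nat -> f n = 0) by (intros n Hn; unfold f; rewrite Hz by exact Hn; ring).
  assert (Htail : forall j, Rabs (sum_f_R0 f (N + j)) <= K * (exp_taylor B (N + j) - exp_taylor B N)).
  { induction j as [|j IHj].
    - rewrite Nat.add_0_r, sum_f_R0_eq0, Rabs_R0 by exact Hf0. lra.
    - rewrite Nat.add_succ_r, tech5. unfold exp_taylor in *. rewrite tech5.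
      eapply Rle_trans; [apply Rabs_triang |].
      pose proof (exp_type_term_le T t (S (N + j)) Ht) as Hterm. fold B in Hterm.
      unfold f in *. lra. }
  apply (Un_cv_Rabs_le _ _ _ (Hh t)). intro k. fold f.
  pose proof (exp_taylor_le_exp B N HB).
  destruct (le_lt_dec k N) as [Hk | Hk].
  - rewrite sum_f_R0_eq0, Rabs_R0 by (intros; apply Hf0; lia). nra.
  - replace k with (N + (k - N))%nat by lia. eapply Rle_trans; [apply Htail |].
    pose proof (exp_taylor_le_exp B (N + (k - N)) HB). nra.
Qed.
End ExpTypeSeries.

(* [Defs.RInt] is defined by choice, so it carries the Riemann integral only
   once integrability is established; here it comes from continuity. *)
Lemma RInt_le_bound (f : R -> R) a b c : a <= b ->
  (forall t, a <= t <= b -> continuity_pt f t) ->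
  (forall t, a <= t <= b -> f t <= c) -> Defs.RInt f a b <= c * (b - a).
Proof.
  intros Hab Hcont Hf. unfold Defs.RInt.
  destruct (epsilon_spec (inhabits 0)
              (fun v => exists pr : Riemann_integrable f a b, RiemannInt pr = v)) as [pr <-].
  { exists (RiemannInt (continuity_implies_RiemannInt Hab Hcont)). eexists. reflexivity. }
  assert (prc : Riemann_integrable (fun _ => c) a b).
  { apply continuity_implies_RiemannInt; [exact Hab |]. intros t _. apply continuity_pt_const.
    intros u v; reflexivity. }
  rewrite <- (RiemannInt_const c a b prc). apply RiemannInt_P19; [exact Hab |].
  intros t Ht. apply Hf. lra.
Qed.

Lemma list_sum_R_ge0 {T : Type} (F : T -> R) (l : list T) :
  (forall x, 0 <= F x) -> 0 <= list_sum_R F l.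
Proof. intro HF. induction l as [|x l IHl]; simpl; [lra | pose proof (HF x); lra]. Qed.

Lemma list_sum_R_ge_In {T : Type} (F : T -> R) (l : list T) x :
  (forall x, 0 <= F x) -> In x l -> F x <= list_sum_R F l.
Proof.
  intro HF. induction l as [|y l IHl]; simpl; [tauto |].
  pose proof (list_sum_R_ge0 F l HF). pose proof (HF y).
  intros [<- | Hx]; [lra | pose proof (IHl Hx); lra].
Qed.

Lemma list_sum_R_le_length {T : Type} (F : T -> R) (l : list T) b :
  (forall x, In x l -> F x <= b) -> list_sum_R F l <= INR (length l) * b.
Proof.
  induction l as [|x l IHl]; intro Hb; cbn [list_sum_R length]; [simpl; lra |].
  rewrite S_INR. pose proof (Hb x (or_introl eq_refl)).
  pose proof (IHl (fun y Hy => Hb y (or_intror Hy))). lra.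
Qed.

Lemma list_sum_R_incl_le {T : Type} (F : T -> R) (l' l : list T) b :
  NoDup l' -> incl l' l -> (forall x, In x l -> F x <= b) -> 0 <= b ->
  list_sum_R F l' <= INR (length l) * b.
Proof.
  intros Hnd Hincl Hb Hb0.
  apply Rle_trans with (INR (length l') * b).
  - apply list_sum_R_le_length. intros x Hx. apply Hb, Hincl, Hx.
  - apply Rmult_le_compat_r; [exact Hb0 |]. apply le_INR, NoDup_incl_length; assumption.
Qed.

Lemma sum_between_lo_le {T : Type} (G : T -> Prop) (F : T -> R) (l : list T) lo hi b :
  (forall x, G x -> In x l) -> (forall x, In x l -> F x <= b) -> 0 <= b ->
  sum_between G F lo hi -> lo <= INR (length l) * b.
Proof.
  intros Hl Hb Hb0 [_ Hlo]. apply Rnot_lt_le. intro Hlt.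
  destruct (Hlo (lo - INR (length l) * b)) as [l' [Hnd [HG Hsum]]]; [lra |].
  pose proof (list_sum_R_incl_le F l' l b Hnd
                (fun x Hx => Hl x (proj1 (Forall_forall G l') HG x Hx)) Hb Hb0).
  lra.
Qed.

Section ExpOrbit.
Context {X : CHilbert} (Astar : X -> X) (E : R -> X -> X) (M : R).
Hypothesis hE : is_exp_family Astar E.
Hypothesis HM : 0 <= M.
Hypothesis HAstar : forall z, vnorm (Astar z) <= M * vnorm z.

Lemma RInt_exp_orbit_le (y g : X) N tau : 0 < tau ->
  (forall n, (n <= N)%nat -> inner y (Nat.iter n Astar g) = C0) ->
  Defs.RInt (fun t => Cabs2 (inner y (E t g))) 0 tau <=
  2 * vnorm2 y * vnorm2 g * tau * (exp (tau * M) - exp_taylor (tau * M) N) ^ 2.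
Proof.
  intros Htau Horth.
  set (K := vnorm y * vnorm g). set (r := exp (tau * M) - exp_taylor (tau * M) N).
  assert (HK : 0 <= K) by (apply Rmult_le_pos; apply vnorm_ge0).
  assert (HK2 : K * K = vnorm2 y * vnorm2 g).
  { unfold K. rewrite <- !vnorm_sqr. ring. }
  assert (Hcoef : forall n, vnorm y * vnorm (Nat.iter n Astar g) <= K * M ^ n).
  { intro n. pose proof (vnorm_iter_le Astar M HM HAstar n g). pose proof (vnorm_ge0 y).
    unfold K. nra. }
  pose proof (fun n => Rle_trans _ _ _ (Rabs_re_inner_le y _) (Hcoef n)) as Hre_coef.
  pose proof (fun n => Rle_trans _ _ _ (Rabs_im_inner_le y _) (Hcoef n)) as Him_coef.
  pose proof (fun t => proj1 (exp_family_inner_cv Astar E hE y g t)) as Hre_cv.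
  pose proof (fun t => proj2 (exp_family_inner_cv Astar E hE y g t)) as Him_cv.
  assert (Htail : forall t, 0 <= t <= tau ->
    Rabs (re (inner y (E t g))) <= K * r /\ Rabs (im (inner y (E t g))) <= K * r).
  { intros t Ht. assert (Ht' : Rabs t <= tau) by (rewrite Rabs_pos_eq; lra).
    split.
    - exact (exp_type_series_tail _ K M _ HK HM Hre_coef Hre_cv N tau t (Rlt_le _ _ Htau)
               (fun n Hn => f_equal re (Horth n Hn)) Ht').
    - exact (exp_type_series_tail _ K M _ HK HM Him_coef Him_cv N tau t (Rlt_le _ _ Htau)
               (fun n Hn => f_equal im (Horth n Hn)) Ht'). }
  eapply Rle_trans.
  - apply (RInt_le_bound _ 0 tau (2 * (K * r) * (K * r))); [lra | |].
    + intros t _. unfold Cabs2.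
      pose proof (exp_type_series_continuous _ K M _ Hre_coef Hre_cv t).
      pose proof (exp_type_series_continuous _ K M _ Him_coef Him_cv t).
      apply continuity_pt_plus; apply continuity_pt_mult; assumption.
    + intros t Ht. destruct (Htail t Ht) as [Hre Him]. unfold Cabs2.
      pose proof (Rsqr_abs (re (inner y (E t g)))). pose proof (Rsqr_abs (im (inner y (E t g)))).
      pose proof (Rabs_pos (re (inner y (E t g)))). pose proof (Rabs_pos (im (inner y (E t g)))).
      unfold Rsqr in *. nra.
  - right. replace (2 * (K * r) * (K * r) * (tau - 0)) with (2 * (K * K) * tau * r ^ 2) by ring.
    rewrite HK2. ring.
Qed.
End ExpOrbit.

Theorem corollary3p7 (X : CHilbert) (hsep : @separable X)
    (hinf : @infinite_dimensional X)
    (A : X -> X) (hA : bounded_linear A)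
    (Astar : X -> X) (hAstar : is_adjoint A Astar)
    (E : R -> X -> X) (hE : is_exp_family Astar E)
    (tau : R) (htau : 0 < tau)
    (G : X -> Prop) (hG : countable_set G)
    (hframe : semi_continuous_frame E G tau) :
  infinite_set G.
Proof.
  intros [l Hl].
  destruct hframe as [c1 [c2 [Hc1 [_ Hframe]]]].
  destruct (adjoint_norm_bound A Astar hA hAstar) as [M [HM HAstar]].
  set (Sl := list_sum_R vnorm2 l).
  assert (HSl : 0 <= Sl) by (apply list_sum_R_ge0, vnorm2_ge0).
  destruct (exp_taylor_tail_small (tau * M) (2 * INR (length l) * tau * Sl) c1) as [N HN];
    [pose proof (pos_INR (length l)); apply Rmult_le_pos; nra | exact Hc1 |].
  set (r := exp (tau * M) - exp_taylor (tau * M) N) in HN.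
  destruct (exists_orthogonal_to_orbits hinf Astar l N) as [y [Hy0 Hy]].
  pose proof (vnorm2_gt0 y Hy0) as Hyn.
  assert (Hbound : forall g, In g l ->
    Defs.RInt (fun t => Cabs2 (inner y (E t g))) 0 tau <= vnorm2 y * (2 * Sl * tau * r ^ 2)).
  { intros g Hg.
    pose proof (RInt_exp_orbit_le Astar E M hE HM HAstar y g N tau htau (fun n => Hy g n Hg))
      as Hint.
    fold r in Hint. pose proof (list_sum_R_ge_In vnorm2 l g vnorm2_ge0 Hg) as Hg2.
    fold Sl in Hg2. pose proof (pow2_ge_0 r). pose proof (vnorm2_ge0 g).
    eapply Rle_trans; [exact Hint |].
    replace (2 * vnorm2 y * vnorm2 g * tau * r ^ 2) with (vnorm2 y * (2 * vnorm2 g * tau * r ^ 2))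
      by ring.
    apply Rmult_le_compat_l; [lra |]. apply Rmult_le_compat_r; [lra |]. nra. }
  assert (Hb0 : 0 <= vnorm2 y * (2 * Sl * tau * r ^ 2)).
  { apply Rmult_le_pos; [lra |]. apply Rmult_le_pos; [nra | apply pow2_ge_0]. }
  pose proof (sum_between_lo_le G _ l _ _ _ Hl Hbound Hb0 (Hframe y)) as Hle.
  rewrite vnorm_pow2 in Hle.
  replace (INR (length l) * (vnorm2 y * (2 * Sl * tau * r ^ 2)))
    with (vnorm2 y * (2 * INR (length l) * tau * Sl * r ^ 2)) in Hle by ring.
  pose proof (Rmult_lt_compat_l (vnorm2 y) _ _ Hyn HN). lra.
Qed.
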